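(* Let $X$ be a nonempty set, let $(Y,\|\cdot,\cdot\|)$ be a linear $2$-normed space of dimension $d$ with $2\le d<\infty$, and let $\mathcal I\subset 2^{\mathbb N}$ be an admissible ideal. Let $f,f_n:X\to Y$ ($n\in\mathbb N$). If $\{f_n\}$ is $\mathcal I$-uniformly convergent to $f$, then $\{f_n\}$ is $\mathcal I$-equal convergent to $f$.
   Context: A $2$-norm on a real vector space $Y$ of dimension $d$, $2\le d<\infty$, is a function $\|\cdot,\cdot\|:Y\times Y\to\mathbb R$ such that: $\|x,y\|=0$ iff $x,y$ are linearly dependent; $\|x,y\|=\|y,x\|$; $\|\alpha x,y\|=|\alpha|\,\|x,y\|$ for $\alpha\in\mathbb R$; $\|x+y,z\|\le\|x,z\|+\|y,z\|$. An ideal $\mathcal I\subset 2^{\mathbb N}$ is a family closed under finite unions and subsets; it is admissible if it is proper ($\mathbb N\notin\mathcal I$) and contains all singletons. A real sequence $\{a_n\}$ is $\mathcal I$-convergent to $a$ ($\mathcal I\text{-}\lim a_n=a$) if for every $\varepsilon>0$, $\{n:|a_n-a|\ge\varepsilon\}\in\mathcal I$. $\{f_n\}$ is $\mathcal I$-uniformly convergent to $f$ if for every $\varepsilon>0$ there is $A\in\mathcal I$ such that $\|f_n(x)-f(x),z\|<\varepsilon$ for all $n\in\mathbb N\setminus A$, all $x\in X$ and all $z\in Y$. $\{f_n\}$ is $\mathcal I$-equal convergent to $f$ if there is a sequence $\{\varepsilon_n\}$ of positive reals with $\mathcal I\text{-}\lim\varepsilon_n=0$ such that for every $x\in X$ and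 every $z\in Y$, the set $\{n\in\mathbb N:\|f_n(x)-f(x),z\|\ge\varepsilon_n\}\in\mathcal I$. *)

From mathcomp Require Import all_boot all_order all_algebra.
From mathcomp Require Import reals.
Set Implicit Arguments. Unset Strict Implicit. Unset Printing Implicit Defensive.
Import Order.TTheory GRing.Theory Num.Theory.
Local Open Scope ring_scope.

Definition is_2norm (R : realType) (Y : vectType R) (N : Y -> Y -> R) : Prop :=
  [/\ (forall x y : Y, N x y = 0 <-> ~~ free [:: x; y]),
      (forall x y : Y, N x y = N y x),
      (forall (a : R) (x y : Y), N (a *: x) y = `|a| * N x y) &
      (forall x y z : Y, N (x + y) z <= N x z + N y z)].

Definition is_ideal (I : (nat -> Prop) -> Prop) : Prop :=
  (forall A B, I A -> I B -> I (fun n => A n \/ B n)) /\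
  (forall A B : nat -> Prop, I A -> (forall n, B n -> A n) -> I B).

Definition admissible (I : (nat -> Prop) -> Prop) : Prop :=
  [/\ is_ideal I, ~ I (fun _ => True) & forall k : nat, I (fun n => n = k)].

Definition I_lim (R : realType) (I : (nat -> Prop) -> Prop) (a : nat -> R) (l : R) : Prop :=
  forall eps : R, 0 < eps -> I (fun n => eps <= `|a n - l|).

Definition I_uniform_conv (R : realType) (Y : vectType R) (N : Y -> Y -> R)
  (I : (nat -> Prop) -> Prop) (X : Type) (fn : nat -> X -> Y) (f : X -> Y) : Prop :=
  forall eps : R, 0 < eps -> exists A : nat -> Prop, I A /\
    forall n, ~ A n -> forall (x : X) (z : Y), N (fn n x - f x) z < eps.

Definition I_equal_conv (R : realType) (Y : vectType R) (N : Y -> Y -> R)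
  (I : (nat -> Prop) -> Prop) (X : Type) (fn : nat -> X -> Y) (f : X -> Y) : Prop :=
  exists e : nat -> R, (forall n, 0 < e n) /\ I_lim I e 0 /\
    forall (x : X) (z : Y), I (fun n => e n <= N (fn n x - f x) z).

(* Take e n := sup_(x,z) min (N (fn n x - f x) z) 1 + 1 / (n + 1); the truncation
   at 1 keeps the supremum finite.  Uniform I-convergence makes the supremum
   small outside a set of I, so e is I-convergent to 0, and since e n strictly
   exceeds every value N (fn n x - f x) z <= 1, the inequality
   e n <= N (fn n x - f x) z can only hold on the exceptional set of I for the
   uniform bound 1. *)

From mathcomp Require Import all_boot all_order all_algebra.
From mathcomp Require Import boolp classical_sets reals.
From mathcomp Require Import lra.
Import Order.TTheory GRing.Theory Num.Theory.
Local Open Scope ring_scope.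
Local Open Scope classical_set_scope.

Lemma twonorm_ge0 (R : realType) (Y : vectType R) (N : Y -> Y -> R) :
  is_2norm N -> forall x y : Y, 0 <= N x y.
Proof.
move=> [_ _ NZ ND] x y.
have N0 : N 0 y = 0 by rewrite -(scale0r x) NZ normr0 mul0r.
have NN : N (- x) y = N x y by rewrite -scaleN1r NZ normrN normr1 mul1r.
have := ND x (- x) y; rewrite subrr N0 NN; lra.
Qed.

Definition sup_min1 {R : realType} {T : Type} (g : T -> R) : R :=
  sup (range (fun t => Num.min (g t) 1)).

Section SupMin1.
Context {R : realType} {T : Type} (g : T -> R).
Hypothesis T0 : inhabited T.

Let range_min1_neq0 : range (fun t => Num.min (g t) 1) !=set0.
Proof. by case: T0 => t; exists (Num.min (g t) 1), t. Qed.

Lemma sup_min1_ub (t : T) : Num.min (g t) 1 <= sup_min1 g.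
Proof.
apply: sup_upper_bound; last by exists t.
split; first by exists (Num.min (g t) 1), t.
by exists 1 => _ [u _ <-]; rewrite ge_min lexx orbT.
Qed.

Lemma ge_sup_min1 {c : R} : (forall t, g t <= c) -> sup_min1 g <= c.
Proof.
by move=> gc; apply: ge_sup => // _ [t _ <-]; rewrite ge_min gc.
Qed.

Lemma sup_min1_ge0 : (forall t, 0 <= g t) -> 0 <= sup_min1 g.
Proof.
case: T0 => t g_ge0; apply: le_trans (sup_min1_ub t).
by rewrite le_min g_ge0 ler01.
Qed.

End SupMin1.

Section Ideal.
Context {R : realType} {I : (nat -> Prop) -> Prop}.
Hypotheses (I_ideal : is_ideal I) (I_single : forall k : nat, I (fun n => n = k)).

Lemma ideal_sub {A B : nat -> Prop} : I A -> (forall n, B n -> A n) -> I B.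
Proof. exact: I_ideal.2. Qed.

Lemma ideal_or {A B : nat -> Prop} : I A -> I B -> I (fun n => A n \/ B n).
Proof. exact: I_ideal.1. Qed.

Lemma ideal_ltn (K : nat) : I (fun n => (n < K)%N).
Proof.
elim: K => [|K IHK]; first by apply: ideal_sub (I_single 0) _.
apply: ideal_sub (ideal_or IHK (I_single K)) _ => n.
by rewrite ltnS leq_eqVlt => /orP[/eqP|]; [right|left].
Qed.

Lemma I_lim_invSn : I_lim I (fun n => (n.+1%:R)^-1 : R) 0.
Proof.
move=> eps eps_gt0; set K := Num.Def.archi_bound eps^-1.
have epsVK : eps^-1 < K%:R by rewrite archi_boundP // invr_ge0 ltW.
apply: ideal_sub (ideal_ltn K) _ => n; rewrite subr0 ger0_norm ?invr_ge0 // leNgt.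
apply: contraNT; rewrite -leqNgt -ltnS -(ltr_nat R) => Kn.
by rewrite invf_plt ?posrE // (lt_trans epsVK Kn).
Qed.

Lemma I_limD0 (a b : nat -> R) :
  I_lim I a 0 -> I_lim I b 0 -> I_lim I (fun n => a n + b n) 0.
Proof.
move=> a0 b0 eps eps_gt0; have eps2_gt0 : 0 < eps / 2 by rewrite divr_gt0.
apply: ideal_sub (ideal_or (a0 _ eps2_gt0) (b0 _ eps2_gt0)) _ => n.
rewrite !subr0 => eps_le; apply: contrapT => /not_orP[/negP + /negP].
rewrite -!ltNge => an_lt bn_lt; have := ler_normD (a n) (b n); lra.
Qed.

Section UniformToEqual.
Context {T : Type} (g : nat -> T -> R).
Hypotheses (T0 : inhabited T) (g_ge0 : forall n t, 0 <= g n t).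
Hypothesis g_unif : forall eps : R, 0 < eps ->
  exists A : nat -> Prop, I A /\ forall n, ~ A n -> forall t, g n t < eps.

Lemma I_lim_sup_min1 : I_lim I (fun n => sup_min1 (g n)) 0.
Proof.
move=> eps eps_gt0; have eps2_gt0 : 0 < eps / 2 by rewrite divr_gt0.
have [A [IA gA]] := g_unif _ eps2_gt0; apply: ideal_sub IA _ => n.
rewrite subr0 ger0_norm ?sup_min1_ge0 // => eps_le; apply: contrapT => nA.
have := ge_sup_min1 (g n) T0 (fun t => ltW (gA n nA t)); lra.
Qed.

Lemma I_equal_of_uniform : exists e : nat -> R, (forall n, 0 < e n) /\
  I_lim I e 0 /\ forall t, I (fun n => e n <= g n t).
Proof.
pose e n := sup_min1 (g n) + (n.+1%:R)^-1.
exists e; split; [|split].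
- by move=> n; rewrite ltr_wpDl ?sup_min1_ge0 ?invr_gt0.
- exact: I_limD0 I_lim_sup_min1 I_lim_invSn.
- move=> t; have [A [IA gA]] := g_unif _ ltr01; apply: ideal_sub IA _ => n e_le.
  apply: contrapT => nA; have := sup_min1_ub (g n) t.
  rewrite min_l; last exact/ltW/gA.
  move=> g_le_sup; move: e_le; apply/negP; rewrite -ltNge.
  by apply: le_lt_trans g_le_sup _; rewrite ltrDl invr_gt0.
Qed.

End UniformToEqual.

End Ideal.

Theorem mainTheorem4 (R : realType) (X : Type) (Y : vectType R)
  (N : Y -> Y -> R) (I : (nat -> Prop) -> Prop)
  (fn : nat -> X -> Y) (f : X -> Y) :
  inhabited X ->
  (2 <= \dim (fullv : {vspace Y}))%N ->
  is_2norm N ->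
  admissible I ->
  I_uniform_conv N I fn f ->
  I_equal_conv N I fn f.
Proof.
move=> [x0] _ N2 [I_ideal _ I_single] unif.
pose g n (t : X * Y) := N (fn n t.1 - f t.1) t.2.
have g_ge0 n t : 0 <= g n t by apply: twonorm_ge0.
have g_unif eps : 0 < eps ->
    exists A, I A /\ forall n, ~ A n -> forall t, g n t < eps.
  by move=> /unif[A [IA fA]]; exists A; split=> // n nA [x z]; apply: fA.
have [e [e_gt0 [e_lim e_small]]] :=
  I_equal_of_uniform I_ideal I_single g (inhabits (x0, 0)) g_ge0 g_unif.
exists e; split=> //; split=> // x z; exact: (e_small (x, z)).
Qed.
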